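(* Let $m,n\ge1$, $\delta\in\mathbb Z$ with $\delta\ne m$, $N=m+n$, and let $\omega_k=\omega_k(M^{\mathfrak p}(\underline\delta))$. Then $\omega_0=m+n$, $\omega_1=-\delta m+\frac{(m+n)^2}{2}$, and for $k\ge2$ $$\omega_k=(\beta_1+\beta_2)\omega_{k-1}-\beta_1\beta_2\omega_{k-2},\qquad \beta_1=-\delta+\tfrac{m+n}2,\ \beta_2=\tfrac{n-m}2.$$ Equivalently, $\sum_{k\ge0}\omega_ku^{-k}=\dfrac{\omega_0+(\omega_1-(\beta_1+\beta_2)\omega_0)u^{-1}}{1-(\beta_1+\beta_2)u^{-1}+\beta_1\beta_2u^{-2}}$.
   Context: $\mathfrak{gl}_N$ with matrix units $E_{ij}$, $\epsilon_i$ dual to $E_{ii}$, Borel of upper triangular matrices; $\mathfrak p$ the standard parabolic with Levi $\mathfrak{gl}_m\oplus\mathfrak{gl}_n$; $M^{\mathfrak p}(\lambda)=U(\mathfrak{gl}_N)\otimes_{U(\mathfrak p)}E(\lambda)$ the parabolic Verma module; $\underline\delta=-\delta(\epsilon_1+\cdots+\epsilon_m)$. $V=\mathbb C^N$ with basis $v_i$, $E_{ij}v_k=\delta_{jk}v_i$; $V^*$ with dual basis $v_i^*$, $E_{ij}v_k^*=-\delta_{ik}v_j^*$. $\Omega=\sum_{i,j}E_{ij}\otimes E_{ji}$; on $M\otimes V\otimes V^*$ (factors numbered $0,1,2$) $y_1=\Omega_{01}+\frac N2$, with $\Omega_{01}$ the action of $\Omega$ on factors $0,1$. For a highest weight module $M$,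 $\omega_k(M)$ is the scalar by which $M\to M\otimes V\otimes V^*\xrightarrow{y_1^k}M\otimes V\otimes V^*\to M$ acts, the first map $m\mapsto\sum_j m\otimes v_j\otimes v_j^*$, the last $m\otimes v_i\otimes v_j^*\mapsto\delta_{ij}m$. *)

From HB Require Import structures.
From mathcomp Require Import all_boot all_order all_algebra all_field.
Set Implicit Arguments. Unset Strict Implicit. Unset Printing Implicit Defensive.
Import GRing.Theory Num.Theory.
Local Open Scope ring_scope.

(* A gl_N-module structure on M: rho i j is the action of the matrix unit E_ij,
   linear, satisfying [E_ij, E_kl] = delta_jk E_il - delta_li E_kj. *)
Definition gl_rep (N : nat) (M : lmodType algC) (rho : 'I_N -> 'I_N -> M -> M) : Prop :=
  (forall i j (a : algC) (x y : M), rho i j (a *: x + y) = a *: rho i j x + rho i j y) /\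
  (forall i j k l (x : M),
      rho i j (rho k l x) - rho k l (rho i j x)
      = (if j == k then rho i l x else 0) - (if l == i then rho k j x else 0)).

(* i and j lie in the same diagonal block of the Levi gl_m (+) gl_n *)
Definition same_block (m n : nat) (i j : 'I_(m + n)) : bool := ((i < m)%N == (j < m)%N).

(* w spans a copy of the one-dimensional p-module E(lam): every E_ij in p
   (i<j, or i,j in the same Levi block) with i<>j kills w, and E_ii w = lam_i w. *)
Definition pvec (m n : nat) (M : lmodType algC) (rho : 'I_(m + n) -> 'I_(m + n) -> M -> M)
    (lam : 'I_(m + n) -> algC) (w : M) : Prop :=
  (forall i j : 'I_(m + n), (i < j)%N || same_block i j -> i != j -> rho i j w = 0) /\
  (forall i, rho i i w = lam i *: w).

Definition gl_hom (N : nat) (M W : lmodType algC) (rhoM : 'I_N -> 'I_N -> M -> M)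
    (rhoW : 'I_N -> 'I_N -> W -> W) (f : M -> W) : Prop :=
  (forall (a : algC) x y, f (a *: x + y) = a *: f x + f y) /\
  (forall i j x, f (rhoM i j x) = rhoW i j (f x)).

(* (M, v) is the parabolic Verma module U(gl_N) (x)_{U(p)} E(lam) with generator
   v = 1 (x) 1, characterised by its universal property (induction). *)
Definition is_parabolic_Verma (m n : nat) (M : lmodType algC)
    (rho : 'I_(m + n) -> 'I_(m + n) -> M -> M) (lam : 'I_(m + n) -> algC) (v : M) : Prop :=
  pvec rho lam v /\
  forall (W : lmodType algC) (rhoW : 'I_(m + n) -> 'I_(m + n) -> W -> W) (w : W),
    gl_rep rhoW -> pvec rhoW lam w ->
    exists f : M -> W, [/\ gl_hom rho rhoW f, f v = w &
      forall g : M -> W, gl_hom rho rhoW g -> g v = w -> forall x, g x = f x].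

(* M (x) V (x) V^* with V = C^N, written in the basis v_i (x) v_j^*:
   t i j is the M-coefficient of v_i (x) v_j^*. *)
Definition tens (N : nat) (M : lmodType algC) := 'I_N -> 'I_N -> M.

(* E_ba acting on factor 1 (V):  E_ba v_i = delta_ai v_b *)
Definition E_on_V (N : nat) (M : lmodType algC) (b a : 'I_N) (t : tens N M) : tens N M :=
  fun c j => if c == b then t a j else 0.

Definition E_on_M (N : nat) (M : lmodType algC) (rho : 'I_N -> 'I_N -> M -> M)
    (a b : 'I_N) (t : tens N M) : tens N M :=
  fun i j => rho a b (t i j).

(* Omega_01 = sum_{a,b} E_ab (x) E_ba (x) 1 *)
Definition Omega01 (N : nat) (M : lmodType algC) (rho : 'I_N -> 'I_N -> M -> M)
    (t : tens N M) : tens N M :=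
  fun c j => \sum_(a < N) \sum_(b < N) E_on_M rho a b (E_on_V b a t) c j.

Definition y1 (N : nat) (M : lmodType algC) (rho : 'I_N -> 'I_N -> M -> M)
    (t : tens N M) : tens N M :=
  fun c j => Omega01 rho t c j + (N%:R / 2) *: t c j.

(* m |-> sum_j m (x) v_j (x) v_j^* *)
Definition coev (N : nat) (M : lmodType algC) (x : M) : tens N M :=
  fun i j => if i == j then x else 0.

(* m (x) v_i (x) v_j^* |-> delta_ij m *)
Definition ev (N : nat) (M : lmodType algC) (t : tens N M) : M := \sum_(i < N) t i i.

Definition omega_is (N : nat) (M : lmodType algC) (rho : 'I_N -> 'I_N -> M -> M)
    (k : nat) (c : algC) : Prop :=
  forall x : M, ev (iter k (y1 rho) (@coev N M x)) = c *: x.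

(* the weight underline-delta = -delta (eps_1 + ... + eps_m) *)
Definition ulam (m n : nat) (delta : int) : 'I_(m + n) -> algC :=
  fun i => if (i < m)%N then - (delta%:~R) else 0.

From HB Require Import structures.
From mathcomp Require Import all_boot all_order all_algebra all_field ssrAC.
From Stdlib Require Import FunctionalExtensionality.
From mathcomp Require Import ring.
Import GRing.Theory Num.Theory.
Set Implicit Arguments. Unset Strict Implicit. Unset Printing Implicit Defensive.
Local Open Scope ring_scope.

(* Write F_k(x) = ev (y1^k (coev x)) for the composite M -> M (x) V (x) V^* -> M whose
   scalar value is omega_k.  The proof has four steps.
   1. F_k is a gl_N-endomorphism of M: coev and ev intertwine rho with the diagonal
      action of E_ij on M (x) V (x) V^*, and Omega_01 (hence y1) commutes with that
      action, since Omega is the invariant tensor of factors 0 and 1.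
   2. By the universal property of the parabolic Verma module, an endomorphism is
      determined by its value on the generator v; so F_k = c id once F_k v = c v.
   3. From the p-weight conditions on v one computes
      (y1 - beta1)(y1 - beta2)(coev v) = 0, with beta1 = -delta + (m+n)/2 and
      beta2 = (n-m)/2; hence F_(k+2) v = (beta1+beta2) F_(k+1) v - beta1 beta2 F_k v,
      while F_0 v = (m+n) v and F_1 v = (-delta m + (m+n)^2/2) v.
   4. Consequently omega_k is the linear recurrence sequence with these data. *)

Section RepresentationLinearity.
Variables (N : nat) (M : lmodType algC) (rho : 'I_N -> 'I_N -> M -> M).
Hypothesis hrep : gl_rep rho.

Lemma rhoD i j x y : rho i j (x + y) = rho i j x + rho i j y.
Proof. by have := hrep.1 i j 1 x y; rewrite !scale1r. Qed.

Lemma rho0 i j : rho i j 0 = 0.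
Proof. by apply/(addrI (rho i j 0)); rewrite -rhoD !addr0. Qed.

Lemma rhoZ i j a x : rho i j (a *: x) = a *: rho i j x.
Proof. by have := hrep.1 i j a x 0; rewrite addr0 rho0 addr0. Qed.

Lemma rhoB i j x y : rho i j (x - y) = rho i j x - rho i j y.
Proof. by rewrite -scaleN1r -[- rho i j y]scaleN1r -rhoZ rhoD. Qed.

Lemma rho_sum i j (F : 'I_N -> M) :
  rho i j (\sum_(b < N) F b) = \sum_(b < N) rho i j (F b).
Proof.
apply: (big_ind2 (fun x y => rho i j x = y)) => [|x1 y1 x2 y2 <- <-|//].
  exact: rho0.
exact: rhoD.
Qed.

Lemma rho_if i j (b : bool) x :
  rho i j (if b then x else 0) = if b then rho i j x else 0.
Proof. by case: b; rewrite ?rho0. Qed.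

Lemma rho_comm i j k l x :
  rho i j (rho k l x) = rho k l (rho i j x) +
     ((if j == k then rho i l x else 0) - (if l == i then rho k j x else 0)).
Proof. by rewrite -hrep.2 addrC subrK. Qed.

End RepresentationLinearity.

Lemma sum_delta (N : nat) (V : zmodType) (j : 'I_N) (F : 'I_N -> V) :
  \sum_(b < N) (if b == j then F b else 0) = F j.
Proof. by rewrite -big_mkcond big_pred1_eq. Qed.

Lemma sum_delta' (N : nat) (V : zmodType) (j : 'I_N) (F : 'I_N -> V) :
  \sum_(b < N) (if j == b then F b else 0) = F j.
Proof. by rewrite -[RHS](sum_delta j); apply: eq_bigr => b _; rewrite eq_sym. Qed.

Lemma sum_if (N : nat) (V : zmodType) (b : bool) (F : 'I_N -> V) :
  \sum_(k < N) (if b then F k else 0) = if b then \sum_(k < N) F k else 0.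
Proof. by case: b => //; rewrite big1. Qed.

Lemma if_scale (R : pzRingType) (V : lmodType R) (b : bool) (a : R) (x : V) :
  (if b then a *: x else 0) = a *: (if b then x else 0).
Proof. by case: b; rewrite ?scaler0. Qed.

Lemma if_comb (R : pzRingType) (V : lmodType R) (c : bool) (a b : R) (x y : V) :
  (if c then a *: x + b *: y else 0) = a *: (if c then x else 0) + b *: (if c then y else 0).
Proof. by case: c; rewrite ?scaler0 ?addr0. Qed.

Lemma comb_addB (R : pzRingType) (V : lmodType R) (a b : R) (x1 x2 x3 y1 y2 y3 : V) :
  (a *: x1 + b *: y1) + (a *: x2 + b *: y2) - (a *: x3 + b *: y3)
  = a *: (x1 + x2 - x3) + b *: (y1 + y2 - y3).
Proof. by rewrite !scalerBr !scalerDr opprD (AC ((2*2)*2) ((1*3*5)*(2*4*6))). Qed.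

Section TensorOperators.
Variables (N : nat) (M : lmodType algC) (rho : 'I_N -> 'I_N -> M -> M).
Hypothesis hrep : gl_rep rho.

Definition tcomb (a : algC) (s : tens N M) (b : algC) (t : tens N M) : tens N M :=
  fun i j => a *: s i j + b *: t i j.

(* The diagonal action of E_ij on M (x) V (x) V^*:
   E_ij on M, E_ij v_a = delta_ja v_i on V, and E_ij v_a^* = - delta_ai v_j^* on V^*. *)
Definition E_diag (i j : 'I_N) (t : tens N M) : tens N M :=
  fun c a => rho i j (t c a) + (if c == i then t j a else 0) - (if a == j then t c i else 0).

Lemma Omega01E (t : tens N M) c j :
  Omega01 rho t c j = \sum_(a < N) rho a c (t a j).
Proof.
apply: eq_bigr => a _; rewrite /E_on_M /E_on_V.
rewrite (bigD1 c) //= eqxx big1 ?addr0 // => b /negbTE nbc.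
by rewrite eq_sym nbc rho0.
Qed.

Lemma y1E (t : tens N M) : y1 rho t = tcomb 1 (Omega01 rho t) (N%:R / 2) t.
Proof.
by apply: functional_extensionality => c; apply: functional_extensionality => j;
  rewrite /tcomb scale1r.
Qed.

Lemma tcomb_interchange p q a b (s s' t t' : tens N M) :
  tcomb p (tcomb a s b t) q (tcomb a s' b t') = tcomb a (tcomb p s q s') b (tcomb p t q t').
Proof.
apply: functional_extensionality => c; apply: functional_extensionality => j.
rewrite /tcomb !scalerDr !scalerA [p * a]mulrC [p * b]mulrC [q * a]mulrC [q * b]mulrC.
exact: addrACA.
Qed.

Lemma Omega01_tcomb a s b t :
  Omega01 rho (tcomb a s b t) = tcomb a (Omega01 rho s) b (Omega01 rho t).
Proof.
apply: functional_extensionality => c; apply: functional_extensionality => j.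
rewrite /tcomb !Omega01E !scaler_sumr -big_split /=.
by apply: eq_bigr => x _; rewrite rhoD // !rhoZ.
Qed.

Lemma y1_tcomb a s b t : y1 rho (tcomb a s b t) = tcomb a (y1 rho s) b (y1 rho t).
Proof. by rewrite !y1E Omega01_tcomb tcomb_interchange. Qed.

Lemma iter_y1_tcomb k a s b t :
  iter k (y1 rho) (tcomb a s b t) = tcomb a (iter k (y1 rho) s) b (iter k (y1 rho) t).
Proof. by elim: k => [|k IH] //=; rewrite IH y1_tcomb. Qed.

Lemma ev_tcomb a s b t : ev (tcomb a s b t) = a *: ev s + b *: ev t.
Proof. by rewrite /ev /tcomb big_split /= -!scaler_sumr. Qed.

Lemma coev_tcomb a (x y : M) : @coev N M (a *: x + y) = tcomb a (coev x) 1 (coev y).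
Proof.
apply: functional_extensionality => c; apply: functional_extensionality => j.
by rewrite /coev /tcomb; case: (c == j); rewrite ?scale1r ?scaler0 ?addr0.
Qed.

Lemma E_diag_tcomb i j a s b t :
  E_diag i j (tcomb a s b t) = tcomb a (E_diag i j s) b (E_diag i j t).
Proof.
apply: functional_extensionality => c; apply: functional_extensionality => l.
rewrite /E_diag /tcomb rhoD // !rhoZ //.
by rewrite !if_comb comb_addB.
Qed.

Lemma Omega01_E_diag i j t : Omega01 rho (E_diag i j t) = E_diag i j (Omega01 rho t).
Proof.
apply: functional_extensionality => c; apply: functional_extensionality => a.
rewrite /E_diag !Omega01E.
under eq_bigr => b _ do rewrite rhoB // rhoD // !rho_if //.
rewrite sumrB big_split /= sum_delta !sum_if rho_sum //.
under [X in _ = X + _ - _]eq_bigr => b _ do rewrite rho_comm //.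
rewrite big_split /= sumrB sum_delta' sum_if.
by congr (_ - _); rewrite addrA subrK.
Qed.

Lemma y1_E_diag i j t : y1 rho (E_diag i j t) = E_diag i j (y1 rho t).
Proof. by rewrite !y1E Omega01_E_diag E_diag_tcomb. Qed.

Lemma iter_y1_E_diag i j k t :
  iter k (y1 rho) (E_diag i j t) = E_diag i j (iter k (y1 rho) t).
Proof. by elim: k => [|k IH] //=; rewrite IH y1_E_diag. Qed.

Lemma coev_E_diag i j x : coev (rho i j x) = E_diag i j (@coev N M x).
Proof.
apply: functional_extensionality => c; apply: functional_extensionality => a.
rewrite /coev /E_diag.
case: (c =P a) => [<-|ne].
  case: (c =P i) => [_|_]; last by rewrite if_same addr0 subr0.
  by rewrite [j == c]eq_sym; case: (c == j); rewrite ?addrK ?addr0 ?subr0.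
rewrite rho0 // add0r.
case: (c =P i) => [_|_]; last by rewrite !if_same subr0.
case: (a =P j) => [e|ne2]; first by rewrite e eqxx subrr.
by case: (j =P a) => [e|_]; [case: ne2; rewrite e | rewrite subr0].
Qed.

Lemma ev_E_diag i j t : ev (E_diag i j t) = rho i j (ev t).
Proof. by rewrite /ev /E_diag sumrB big_split /= rho_sum // !sum_delta addrK. Qed.

Definition omega_op (k : nat) (x : M) : M := ev (iter k (y1 rho) (@coev N M x)).

Lemma omega_op_hom k : gl_hom rho rho (omega_op k).
Proof.
split=> [a x y | i j x]; rewrite /omega_op.
  by rewrite coev_tcomb iter_y1_tcomb ev_tcomb scale1r.
by rewrite coev_E_diag iter_y1_E_diag ev_E_diag.
Qed.

Lemma y1_coev x a j :
  y1 rho (@coev N M x) a j = rho j a x + (N%:R / 2) *: (if a == j then x else 0).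
Proof.
rewrite /y1 Omega01E /coev.
by under eq_bigr => b _ do rewrite rho_if //; rewrite sum_delta.
Qed.

Lemma omega_op0 x : omega_op 0 x = N%:R *: x.
Proof.
rewrite /omega_op /= /ev /coev.
by under eq_bigr => i _ do rewrite eqxx; rewrite sumr_const card_ord scaler_nat.
Qed.

Lemma ev_iter_rec s q t : y1 rho (y1 rho t) = tcomb s (y1 rho t) q t ->
  forall k, ev (iter k.+2 (y1 rho) t)
            = s *: ev (iter k.+1 (y1 rho) t) + q *: ev (iter k (y1 rho) t).
Proof. by move=> ht k; rewrite -addn2 iterD /= ht iter_y1_tcomb ev_tcomb -iterSr. Qed.
End TensorOperators.

Section VermaEndomorphisms.
Variables (m n : nat) (M : lmodType algC) (rho : 'I_(m + n) -> 'I_(m + n) -> M -> M)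
  (lam : 'I_(m + n) -> algC) (v : M).
Hypotheses (hrep : gl_rep rho) (hV : is_parabolic_Verma rho lam v).

(* An endomorphism killing v agrees with the zero map, by uniqueness in the
   universal property (applied with target M and image 0). *)
Lemma verma_hom_vanish (g : M -> M) : gl_hom rho rho g -> g v = 0 -> forall x, g x = 0.
Proof.
move=> hg gv x.
have pv0 : pvec rho lam 0 by split=> [i j _ _ | i]; rewrite rho0 // scaler0.
have [f [_ _ funi]] := hV.2 M rho 0 hrep pv0.
have hz : gl_hom rho rho (fun _ : M => 0 : M).
  by split=> [a y z | i j y]; rewrite ?scaler0 ?addr0 ?rho0.
by rewrite (funi g hg gv x) -(funi _ hz (erefl _) x).
Qed.

Lemma gl_hom_sub_scalar (f : M -> M) (c : algC) :
  gl_hom rho rho f -> gl_hom rho rho (fun x => f x - c *: x).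
Proof.
move=> [flin fhom]; split=> [a x y | i j x] /=.
  by rewrite flin !scalerBr !scalerDr !scalerA [c * a]mulrC opprD addrACA.
by rewrite fhom rhoB // rhoZ.
Qed.

Lemma verma_endo_scalar (f : M -> M) (c : algC) :
  gl_hom rho rho f -> f v = c *: v -> forall x, f x = c *: x.
Proof.
move=> hf fv x; apply/eqP; rewrite -subr_eq0; apply/eqP.
by apply: (verma_hom_vanish (gl_hom_sub_scalar c hf)); rewrite fv subrr.
Qed.
End VermaEndomorphisms.

Fixpoint linrec_pair (w0 w1 s p : algC) (k : nat) : algC * algC :=
  if k is k'.+1 then
    let: (a, b) := linrec_pair w0 w1 s p k' in (b, s * b - p * a)
  else (w0, w1).

Definition linrec (w0 w1 s p : algC) (k : nat) : algC := (linrec_pair w0 w1 s p k).1.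

Lemma linrecSS w0 w1 s p k :
  linrec w0 w1 s p k.+2 = s * linrec w0 w1 s p k.+1 - p * linrec w0 w1 s p k.
Proof. by rewrite /linrec /=; case: (linrec_pair w0 w1 s p k). Qed.

(* The two roots of the quadratic relation satisfied by y1 on coev v. *)
Definition beta1 (m n : nat) (delta : int) : algC := - delta%:~R + (m + n)%:R / 2.
Definition beta2 (m n : nat) : algC := (n%:R - m%:R) / 2.

Lemma sum_ulam (m n : nat) (delta : int) :
  \sum_(a < m + n) @ulam m n delta a = - delta%:~R * m%:R.
Proof.
rewrite big_split_ord /= [X in _ + X]big1 => [|i _]; last first.
  by rewrite /ulam /= ltnNge leq_addr.
rewrite (eq_bigr (fun _ => - delta%:~R)) => [|i _]; last by rewrite /ulam /= ltn_ord.
by rewrite addr0 sumr_const card_ord mulr_natr.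
Qed.

Section HighestWeightComputation.
Variables (m n : nat) (delta : int) (M : lmodType algC)
  (rho : 'I_(m + n) -> 'I_(m + n) -> M -> M) (v : M).
Hypotheses (hrep : gl_rep rho) (pv : pvec rho (@ulam m n delta) v).

(* E_jc kills v when c lies in the second block (E_jc is then in p, or
   diagonal with weight 0). *)
Lemma rho_v_upper (c j : 'I_(m + n)) : (m <= c)%N -> rho j c v = 0.
Proof.
move=> hc; case: (j =P c) => [->|ne].
  by rewrite pv.2 /ulam ltnNge hc /= scale0r.
apply: pv.1; last by apply/eqP.
rewrite /same_block; case: ltnP => //= hjc.
by rewrite !ltnNge hc (leq_trans hc hjc).
Qed.

Lemma rho_v_levi (b c : 'I_(m + n)) :
  (b < m)%N -> (c < m)%N -> rho b c v = if b == c then - delta%:~R *: v else 0.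
Proof.
move=> hb hc; case: (b =P c) => [->|ne]; first by rewrite pv.2 /ulam hc.
by apply: pv.1; [rewrite /same_block hb hc orbT | apply/eqP].
Qed.

(* sum_a E_ja E_ac v = (n - delta) E_jc v: for a in the first block only a = c
   contributes, for a in the second block E_ja E_ac v = E_jc v. *)
Lemma casimir_partial (c j : 'I_(m + n)) :
  \sum_(a < m + n) rho j a (rho a c v) = (n%:R - delta%:~R) *: rho j c v.
Proof.
case: (leqP m c) => hc.
  rewrite big1 => [|a _]; last by rewrite (rho_v_upper (c := c)) // rho0.
  by rewrite rho_v_upper // scaler0.
have term a : rho j a (rho a c v) =
    (if a == c then - delta%:~R *: rho j c v else 0) + (if (m <= a)%N then rho j c v else 0).
  case: (ltnP a m) => ha.
    rewrite rho_v_levi // rho_if // rhoZ // addr0.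
    by case: eqP => [->|].
  rewrite (rho_comm hrep j a a c v) (rho_v_upper (c := a)) // rho0 //.
  rewrite (rho_v_upper (c := a) a) // eqxx if_same subr0 add0r.
  suff /negbTE -> : a != c by rewrite add0r.
  by apply: contraTneq ha => ->; rewrite -ltnNge.
rewrite (eq_bigr _ (fun a _ => term a)) big_split /= sum_delta.
rewrite big_split_ord /= big1 => [|i _]; last by rewrite leqNgt ltn_ord.
rewrite (eq_bigr (fun _ => rho j c v)) => [|i _]; last by rewrite leq_addr.
by rewrite add0r sumr_const card_ord -scaler_nat scalerBl scaleNr addrC.
Qed.

(* The coefficients of Omega_01 applied to the coefficients E_ja v of y1 (coev v). *)
Lemma casimir_on_v (c j : 'I_(m + n)) :
  \sum_(a < m + n) rho a c (rho j a v)
  = (n%:R - delta%:~R - (m + n)%:R) *: rho j c v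
    + (- delta%:~R * m%:R) *: (if c == j then v else 0).
Proof.
under eq_bigr => a _ do rewrite (rho_comm hrep a c j a v) eqxx.
rewrite big_split /= sumrB casimir_partial sum_if sumr_const card_ord.
rewrite (eq_bigr (fun a => @ulam m n delta a *: v)) => [|a _]; last exact: pv.2.
rewrite -scaler_suml sum_ulam if_scale -scaler_nat.
by rewrite [in RHS]scalerBl [RHS]addrAC [LHS]addrA.
Qed.

Lemma y1_quadratic_coev_v :
  y1 rho (y1 rho (@coev (m + n) M v))
  = tcomb (beta1 m n delta + beta2 m n) (y1 rho (coev v))
          (- (beta1 m n delta * beta2 m n)) (coev v).
Proof.
apply: functional_extensionality => c; apply: functional_extensionality => j.
rewrite y1E /tcomb scale1r (Omega01E hrep).
under eq_bigr => a _ do rewrite (y1_coev hrep) rhoD // rhoZ // rho_if //.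
rewrite big_split /= -scaler_sumr sum_delta casimir_on_v !(y1_coev hrep) /coev.
set u := rho j c v; set w := if c == j then v else 0.
rewrite !scalerDr !scalerA [LHS](AC (3*2) ((1*3*4)*(2*5))) /= -[RHS]addrA -!scalerDl.
by congr (_ *: _ + _ *: _); rewrite /beta1 /beta2 natrD; field.
Qed.

Lemma omega_op1_v :
  omega_op rho 1 v = (- delta%:~R * m%:R + (m + n)%:R ^+ 2 / 2) *: v.
Proof.
rewrite /omega_op /= /ev.
under eq_bigr => i _ do rewrite (y1_coev hrep) eqxx pv.2.
rewrite big_split /= -scaler_suml sum_ulam sumr_const card_ord -scaler_nat scalerA -scalerDl.
by congr (_ *: _); field.
Qed.

Lemma omega_op_v k :
  omega_op rho k v
  = linrec (m + n)%:R (- delta%:~R * m%:R + (m + n)%:R ^+ 2 / 2)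
      (beta1 m n delta + beta2 m n) (beta1 m n delta * beta2 m n) k *: v.
Proof.
set om := linrec _ _ _ _.
suff step : omega_op rho k v = om k *: v /\ omega_op rho k.+1 v = om k.+1 *: v.
  by case: step.
elim: k => [|k [IHk IHk1]]; first by rewrite omega_op0 omega_op1_v.
split=> //; rewrite /om linrecSS -/om /omega_op (ev_iter_rec hrep y1_quadratic_coev_v).
by rewrite -/(omega_op rho k.+1 v) -/(omega_op rho k v) IHk1 IHk !scalerA -scalerDl mulNr.
Qed.
End HighestWeightComputation.

Theorem mainTheorem20 (m n : nat) (delta : int)
  (hm : (0 < m)%N) (hn : (0 < n)%N) (hdelta : delta != m%:Z)
  (M : lmodType algC) (rho : 'I_(m + n) -> 'I_(m + n) -> M -> M) (v : M)
  (hrep : gl_rep rho) (hV : @is_parabolic_Verma m n M rho (@ulam m n delta) v) :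
  let beta1 : algC := - delta%:~R + (m + n)%:R / 2 in
  let beta2 : algC := (n%:R - m%:R) / 2 in
  exists omega : nat -> algC,
    [/\ forall k, omega_is rho k (omega k),
        omega 0%N = (m + n)%:R,
        omega 1%N = - delta%:~R * m%:R + (m + n)%:R ^+ 2 / 2
      & forall k, (2 <= k)%N ->
          omega k = (beta1 + beta2) * omega k.-1 - beta1 * beta2 * omega k.-2].
Proof.
move=> b1 b2.
exists (linrec (m + n)%:R (- delta%:~R * m%:R + (m + n)%:R ^+ 2 / 2) (b1 + b2) (b1 * b2)).
split=> [k | // | // | [|[|k]] // _]; last exact: linrecSS.
apply: (verma_endo_scalar hrep hV (omega_op_hom hrep k)).
exact: (omega_op_v hrep hV.1 k).
Qed.
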